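(* Let $0<a<b$ and $v_0\in(a,2a)$. For $\mu\in(v_0,2a]$ define $$\chi_s(\mu)=-\frac{2\sqrt{\mathcal G_s(\mu)-\mathcal G_s(v_0)}}{R_s(v_0)}+2\int_{v_0}^{\mu}\frac{\sqrt{\mathcal G_s(\mu)-\mathcal G_s(\xi)}}{R_s(\xi)^2}\,R_s'(\xi)\,d\xi .$$ Then $\mathcal G_s'(\xi)>0$ on $(a,2a)$, $\chi_s$ is well defined and positive on $(v_0,2a]$, and $\chi_s$ is strictly increasing on $(v_0,2a]$, so that its maximum on this interval is attained at $\mu=2a$.
   Context: $R_s(\xi)=\xi-a-b$, $g(\xi)=(2a-\xi)/\xi^3$, and $\mathcal G_s(\xi)=-\dfrac{a(a+b)}{\xi^2}+\dfrac{3a+b}{\xi}+\log\xi$, so that $\mathcal G_s'(\xi)=-R_s(\xi)g(\xi)=\dfrac{2a(a+b)}{\xi^3}-\dfrac{3a+b}{\xi^2}+\dfrac1\xi$. *)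

From Stdlib Require Import Reals Lra.
From Coquelicot Require Import Coquelicot.
Open Scope R_scope.

Definition Rs (a b xi : R) : R := xi - a - b.

Definition Gs (a b xi : R) : R :=
  - (a * (a + b)) / xi ^ 2 + (3 * a + b) / xi + ln xi.

Definition chi_integrand (a b mu xi : R) : R :=
  sqrt (Gs a b mu - Gs a b xi) / (Rs a b xi) ^ 2 * Derive (Rs a b) xi.

Definition chi_s (a b v0 mu : R) : R :=
  - (2 * sqrt (Gs a b mu - Gs a b v0)) / Rs a b v0
  + 2 * RInt (chi_integrand a b mu) v0 mu.

(* Since a < b, G_s'(xi) = -R_s(xi) g(xi) = (a + b - xi)(2a - xi)/xi^3 >= 0 on (0, 2a], with
   equality only at 2a, so G_s is strictly increasing there while R_s stays negative.  Hence the
   boundary term -2 sqrt(G_s(mu) - G_s(v0))/R_s(v0) is positive and strictly increasing in mu, and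
   the integral term is nonnegative and nondecreasing in mu: as R_s' = 1, its integrand is
   sqrt(G_s(mu) - G_s(xi))/R_s(xi)^2, which is nonnegative and grows
   pointwise with mu, and so does the interval of integration. *)
From Stdlib Require Import Reals Lra Psatz FunctionalExtensionality.
From Coquelicot Require Import Coquelicot.
Open Scope R_scope.

Lemma Rinv_pow2_ge0 r : 0 <= / r ^ 2.
Proof.
destruct (Req_dec r 0) as [-> | r_neq0].
- rewrite pow_i, Rinv_0 by lia. lra.
- left. apply Rinv_0_lt_compat, pow2_gt_0. exact r_neq0.
Qed.

Section GsMonotone.

Variables a b : R.

Definition dGs (x : R) : R := (a + b - x) * (2 * a - x) / x ^ 3.

Lemma is_derive_Gs x : 0 < x -> is_derive (Gs a b) x (dGs x).
Proof.
intros x_gt0. unfold Gs, dGs. auto_derive.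
- repeat split; try nra; lra.
- field. lra.
Qed.

Lemma continuous_Gs x : 0 < x -> continuous (Gs a b) x.
Proof.
intros x_gt0. exact (ex_derive_continuous _ _ (ex_intro _ _ (is_derive_Gs x x_gt0))).
Qed.

Hypothesis a_le_b : a <= b.

Lemma dGs_ge0 x : 0 < x <= 2 * a -> 0 <= dGs x.
Proof.
intros [x_gt0 x_le]. unfold dGs, Rdiv.
apply Rmult_le_pos.
- apply Rmult_le_pos; lra.
- left. now apply Rinv_0_lt_compat, pow_lt.
Qed.

Lemma dGs_gt0 x : 0 < x < 2 * a -> 0 < dGs x.
Proof.
intros [x_gt0 x_lt]. apply Rdiv_lt_0_compat.
- apply Rmult_lt_0_compat; lra.
- now apply pow_lt.
Qed.

Lemma Gs_increment x y : 0 < x <= y ->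
  exists c, x <= c <= y /\ Gs a b y - Gs a b x = dGs c * (y - x).
Proof.
intros [x_gt0 x_le_y].
destruct (MVT_gen (Gs a b) x y dGs) as [c [c_in G_eq]].
- intros z z_in. rewrite Rmin_left in z_in by lra. apply is_derive_Gs. lra.
- intros z z_in. rewrite Rmin_left in z_in by lra.
  apply continuity_pt_filterlim, continuous_Gs. lra.
- rewrite Rmin_left, Rmax_right in c_in by lra. now exists c.
Qed.

Lemma Gs_le x y : 0 < x -> x <= y <= 2 * a -> Gs a b x <= Gs a b y.
Proof.
intros x_gt0 [x_le_y y_le].
destruct (Gs_increment x y) as [c [c_in G_eq]]; [lra|].
assert (0 <= dGs c * (y - x)) by (apply Rmult_le_pos; [apply dGs_ge0|]; lra).
lra.
Qed.

(* G_s' vanishes at 2a, so strict growth is read off on [x, (x + y)/2] only. *)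
Lemma Gs_lt x y : 0 < x -> x < y <= 2 * a -> Gs a b x < Gs a b y.
Proof.
intros x_gt0 [x_lt_y y_le].
set (w := (x + y) / 2).
destruct (Gs_increment x w) as [c [c_in G_eq]]; [unfold w; lra|].
assert (0 < dGs c * (w - x))
  by (apply Rmult_lt_0_compat; [apply dGs_gt0|]; unfold w in *; lra).
assert (Gs a b w <= Gs a b y) by (apply Gs_le; unfold w; lra).
lra.
Qed.

End GsMonotone.

Section ChiIntegrand.

Variables a b : R.

Lemma is_derive_Rs x : is_derive (Rs a b) x 1.
Proof. unfold Rs. auto_derive; auto; ring. Qed.

Lemma chi_integrandE mu :
  chi_integrand a b mu = fun x => sqrt (Gs a b mu - Gs a b x) / Rs a b x ^ 2.
Proof.
apply functional_extensionality. intros x.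
unfold chi_integrand. rewrite (is_derive_unique _ _ _ (is_derive_Rs x)). ring.
Qed.

Lemma continuous_chi_integrand mu x : 0 < x -> Rs a b x <> 0 ->
  continuous (chi_integrand a b mu) x.
Proof.
intros x_gt0 Rs_neq0. rewrite chi_integrandE.
apply (continuous_mult (K := R_AbsRing) (fun y => sqrt (Gs a b mu - Gs a b y))
                                        (fun y => / Rs a b y ^ 2)).
- apply (continuous_comp (fun y => Gs a b mu - Gs a b y) sqrt).
  + apply (continuous_minus (V := R_NormedModule)).
    * apply continuous_const.
    * now apply continuous_Gs.
  + apply continuous_sqrt.
- apply (ex_derive_continuous (fun y => / Rs a b y ^ 2)). unfold Rs in *. auto_derive.
  rewrite Rmult_1_r. now apply Rmult_integral_contrapositive.
Qed.

Lemma ex_RInt_chi_integrand mu c d : 0 < c <= d -> d < a + b ->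
  ex_RInt (chi_integrand a b mu) c d.
Proof.
intros c_in d_lt. apply (ex_RInt_continuous (V := R_CompleteNormedModule)).
intros z z_in. rewrite Rmin_left, Rmax_right in z_in by lra.
apply continuous_chi_integrand; unfold Rs; lra.
Qed.

Lemma chi_integrand_ge0 mu x : 0 <= chi_integrand a b mu x.
Proof.
rewrite chi_integrandE. apply Rmult_le_pos; [apply sqrt_pos | apply Rinv_pow2_ge0].
Qed.

Lemma chi_integrand_le mu1 mu2 x : Gs a b mu1 <= Gs a b mu2 ->
  chi_integrand a b mu1 x <= chi_integrand a b mu2 x.
Proof.
intros G_le. rewrite !chi_integrandE. unfold Rdiv.
apply Rmult_le_compat_r; [apply Rinv_pow2_ge0|].
apply sqrt_le_1_alt. lra.
Qed.

End ChiIntegrand.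

Section ChiMonotone.

Variables a b v0 : R.
Hypothesis a_lt_b : a < b.
Hypothesis v0_gt0 : 0 < v0.

Lemma chi_sE mu : v0 < a + b ->
  chi_s a b v0 mu = 2 * sqrt (Gs a b mu - Gs a b v0) / (a + b - v0)
                    + 2 * RInt (chi_integrand a b mu) v0 mu.
Proof. intros v0_lt. unfold chi_s, Rs. field. lra. Qed.

Lemma RInt_chi_integrand_ge0 mu : v0 <= mu <= 2 * a ->
  0 <= RInt (chi_integrand a b mu) v0 mu.
Proof.
intros mu_in. apply RInt_ge_0; [lra | apply ex_RInt_chi_integrand; lra |].
intros x _. apply chi_integrand_ge0.
Qed.

Lemma RInt_chi_integrand_le mu1 mu2 : v0 <= mu1 -> mu1 <= mu2 <= 2 * a ->
  RInt (chi_integrand a b mu1) v0 mu1 <= RInt (chi_integrand a b mu2) v0 mu2.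
Proof.
intros v0_le mu12.
assert (ex_RInt (chi_integrand a b mu2) v0 mu1) by (apply ex_RInt_chi_integrand; lra).
assert (ex_RInt (chi_integrand a b mu2) mu1 mu2) by (apply ex_RInt_chi_integrand; lra).
rewrite <- (RInt_Chasles _ v0 mu1 mu2) by assumption.
assert (RInt (chi_integrand a b mu1) v0 mu1 <= RInt (chi_integrand a b mu2) v0 mu1).
{ apply RInt_le; [lra | apply ex_RInt_chi_integrand; lra | assumption |].
  intros x _. apply chi_integrand_le, Gs_le; lra. }
assert (0 <= RInt (chi_integrand a b mu2) mu1 mu2).
{ apply RInt_ge_0; [lra | assumption |]. intros x _. apply chi_integrand_ge0. }
unfold plus; simpl. lra.
Qed.

Lemma chi_s_gt0 mu : v0 < mu <= 2 * a -> 0 < chi_s a b v0 mu.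
Proof.
intros mu_in. rewrite chi_sE by lra.
assert (0 < sqrt (Gs a b mu - Gs a b v0)).
{ apply sqrt_lt_R0. assert (Gs a b v0 < Gs a b mu) by (apply Gs_lt; lra). lra. }
assert (0 < 2 * sqrt (Gs a b mu - Gs a b v0) / (a + b - v0))
  by (apply Rdiv_lt_0_compat; lra).
assert (0 <= RInt (chi_integrand a b mu) v0 mu) by (apply RInt_chi_integrand_ge0; lra).
lra.
Qed.

Lemma chi_s_lt mu1 mu2 : v0 < mu1 -> mu1 < mu2 <= 2 * a ->
  chi_s a b v0 mu1 < chi_s a b v0 mu2.
Proof.
intros v0_lt mu12. rewrite !chi_sE by lra.
assert (sqrt (Gs a b mu1 - Gs a b v0) < sqrt (Gs a b mu2 - Gs a b v0)).
{ apply sqrt_lt_1_alt.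
  assert (Gs a b v0 < Gs a b mu1) by (apply Gs_lt; lra).
  assert (Gs a b mu1 < Gs a b mu2) by (apply Gs_lt; lra). lra. }
assert (2 * sqrt (Gs a b mu1 - Gs a b v0) / (a + b - v0)
        < 2 * sqrt (Gs a b mu2 - Gs a b v0) / (a + b - v0))
  by (apply Rmult_lt_compat_r; [apply Rinv_0_lt_compat |]; lra).
assert (RInt (chi_integrand a b mu1) v0 mu1 <= RInt (chi_integrand a b mu2) v0 mu2)
  by (apply RInt_chi_integrand_le; lra).
lra.
Qed.

End ChiMonotone.

Theorem mainTheorem4 (a b v0 : R) :
  0 < a -> a < b -> a < v0 < 2 * a ->
  (forall xi, a < xi < 2 * a -> ex_derive (Gs a b) xi /\ Derive (Gs a b) xi > 0) /\
  (forall mu, v0 < mu <= 2 * a ->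
     0 <= Gs a b mu - Gs a b v0 /\
     Rs a b v0 <> 0 /\
     (forall xi, v0 <= xi <= mu ->
        0 <= Gs a b mu - Gs a b xi /\ Rs a b xi <> 0 /\ ex_derive (Rs a b) xi) /\
     ex_RInt (chi_integrand a b mu) v0 mu /\
     0 < chi_s a b v0 mu) /\
  (forall mu1 mu2, v0 < mu1 -> mu1 < mu2 -> mu2 <= 2 * a ->
     chi_s a b v0 mu1 < chi_s a b v0 mu2) /\
  (forall mu, v0 < mu <= 2 * a -> chi_s a b v0 mu <= chi_s a b v0 (2 * a)).
Proof.
intros a_gt0 a_lt_b v0_in.
split; [| split; [| split]].
- intros xi xi_in. rewrite (is_derive_unique _ _ _ (is_derive_Gs a b xi ltac:(lra))).
  split; [exists (dGs a b xi); apply is_derive_Gs; lra |].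
  apply Rlt_gt, dGs_gt0; lra.
- intros mu mu_in. split; [| split; [| split; [| split]]].
  + assert (Gs a b v0 <= Gs a b mu) by (apply Gs_le; lra). lra.
  + unfold Rs. lra.
  + intros xi xi_in. split; [| split].
    * assert (Gs a b xi <= Gs a b mu) by (apply Gs_le; lra). lra.
    * unfold Rs. lra.
    * exists 1. apply is_derive_Rs.
  + apply ex_RInt_chi_integrand; lra.
  + apply chi_s_gt0; lra.
- intros mu1 mu2 v0_lt mu12 mu2_le. apply chi_s_lt; lra.
- intros mu mu_in. destruct (Req_dec mu (2 * a)) as [-> | mu_neq]; [lra |].
  left. apply chi_s_lt; lra.
Qed.
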